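(* Let $y,l,u\in\mathcal{R}(\mathbb{R}^{+},\mathbb{R})$ be such that $l\leq u$, $l_0\leq y_0\leq u_0$, and $\inf_{s\leq t}(u_s-l_s)>0$ for every $t\geq 0$. Then the reflection problem $RP^u_l(y)$ has at most one solution: if $(x,k)$ and $(\tilde{x},\tilde{k})$ are solutions of $RP^u_l(y)$, then $x=\tilde{x}$ and $k=\tilde{k}$.
   Context: A function $f:\mathbb{R}^+=[0,\infty)\to\mathbb{R}$ is regulated if it has a left limit $f_{t^-}$ at every $t>0$ and a right limit $f_{t^+}$ at every $t\geq0$; $\mathcal{R}(\mathbb{R}^{+},\mathbb{R})$ is the set of regulated functions. Write $\Delta^+f_t=f_{t^+}-f_t$, $\Delta^-f_t=f_t-f_{t^-}$, $a\wedge b=\min(a,b)$, $a\vee b=\max(a,b)$. A regulated function $\phi$ of bounded variation (on every $[0,t]$) decomposes as $\phi_t=\phi^c_t+\sum_{0<s\leq t}\Delta^-\phi_s+\sum_{0\leq s<t}\Delta^+\phi_s$ with $\phi^c$ continuous; its right-continuous part is $\phi^r_t=\phi^c_t+\sum_{0<s\leq t}\Delta^-\phi_s$. Reflection problem $RP^u_l(y)$: for $y,l,u\in\mathcal{R}(\mathbb{R}^{+},\mathbb{R})$ with $l_0\leq y_0\leq u_0$, a pair $(x,k)$ of regulated functions is a solution if there exist $\phi^1,\phi^2$ such that: (i) $x=y+k=y+\phi^1-\phi^2$; (ii) $l\leq x\leq u$; (iii) $\phi^1,\phi^2$ are non-decreasing with $\phi^1_0=\phi^2_0=0$; (iv) $\int_{[0,\infty[}\big((x_s-l_s)\wedge(x_{s^+}-l_{s^+})\big)\,d\phi^{1,r}_s=\int_{[0,\infty[}\big((u_s-x_s)\wedge(u_{s^+}-x_{s^+})\big)\,d\phi^{2,r}_s=0$;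 (v) for every $t\geq0$, $\sum_{s\leq t}(x_{s^+}-l_{s^+})\Delta^+\phi^1_s=\sum_{s\leq t}(u_s-x_s)\Delta^+\phi^1_s=0$ and $\sum_{s\leq t}(u_{s^+}-x_{s^+})\Delta^+\phi^2_s=\sum_{s\leq t}(x_s-l_s)\Delta^+\phi^2_s=0$. Here $\phi^{i,r}$ is the right-continuous part of $\phi^i$. *)

From HB Require Import structures.
From mathcomp Require Import all_boot all_order all_algebra.
From mathcomp Require Import all_classical all_reals all_analysis.
Set Implicit Arguments. Unset Strict Implicit. Unset Printing Implicit Defensive.
Import Order.TTheory GRing.Theory Num.Theory.
Import numFieldNormedType.Exports.
Local Open Scope classical_set_scope.
Local Open Scope ring_scope.

Section RP.
Variable R : realType.

(* A function on R^+ = [0,oo) is represented by f : R -> R; only its values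
   on [0,oo) matter. *)

Definition regulated (f : R -> R) : Prop :=
  (forall t, 0 < t -> cvg (f x @[x --> t^'-])) /\
  (forall t, 0 <= t -> cvg (f x @[x --> t^'+])).

Definition rlim (f : R -> R) (t : R) : R := lim (f x @[x --> t^'+]).

Definition rjump (f : R -> R) (t : R) : R := rlim f t - f t.

(* right-continuous part phi^r_t = phi^c_t + sum_{0<s<=t} Delta^- phi_s
   = phi_t - sum_{0<=s<t} Delta^+ phi_s (for t >= 0), extended by 0 on
   (-oo,0) so that it is a cumulative function on R. *)
Definition rcpart (phi : R -> R) (t : R) : R :=
  if t < 0 then 0
  else phi t - fine (\esum_(s in [set s : R | (0 <= s < t)%R]) (rjump phi s)%:E)%E.

(* the function as a cumulative function (nondecreasing, right-continuous);
   for a nondecreasing phi on [0,oo) the first branch is always taken.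
   The second branch (idfun) is an irrelevant default. *)
Definition as_cumulative (g : R -> R) : cumulative R R :=
  match pselect (nondecreasing g /\ right_continuous g) with
  | left H => HB.pack_for (cumulative R R) g
                (isCumulative.Build R _ R g (proj1 H) (proj2 H))
  | right _ => [the cumulative R R of idfun]
  end.

Definition dphir (phi : R -> R) :=
  lebesgue_stieltjes_measure (as_cumulative (rcpart phi)).

Definition nondecr_R_plus (phi : R -> R) : Prop :=
  forall s t, 0 <= s -> s <= t -> phi s <= phi t.

Definition RP_solution (y l u x k : R -> R) : Prop :=
  regulated x /\ regulated k /\
  exists phi1 phi2 : R -> R,
    [/\ (* (i) *) (forall t, 0 <= t -> x t = y t + k t /\ k t = phi1 t - phi2 t),
        (* (ii) *) (forall t, 0 <= t -> l t <= x t <= u t),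
        (* (iii) *) regulated phi1 /\ regulated phi2 /\
                    nondecr_R_plus phi1 /\ nondecr_R_plus phi2 /\
                    phi1 0 = 0 /\ phi2 0 = 0,
        (* (iv) *)
        (\int[dphir phi1]_(s in (`[0%R, +oo[%classic : set R) : set (measurableTypeR R))
            (Num.min (x s - l s) (rlim x s - rlim l s))%:E = 0)%E /\
        (\int[dphir phi2]_(s in (`[0%R, +oo[%classic : set R) : set (measurableTypeR R))
            (Num.min (u s - x s) (rlim u s - rlim x s))%:E = 0)%E
      & (* (v) *)
        forall t : R, 0 <= t ->
          (\esum_(s in (`[0%R, t]%classic : set R)) ((rlim x s - rlim l s) * rjump phi1 s)%:E = 0)%E /\
          (\esum_(s in (`[0%R, t]%classic : set R)) ((u s - x s) * rjump phi1 s)%:E = 0)%E /\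
          (\esum_(s in (`[0%R, t]%classic : set R)) ((rlim u s - rlim x s) * rjump phi2 s)%:E = 0)%E /\
          (\esum_(s in (`[0%R, t]%classic : set R)) ((x s - l s) * rjump phi2 s)%:E = 0)%E].

End RP.

From HB Require Import structures.
From mathcomp Require Import all_boot all_order all_algebra.
From mathcomp Require Import all_classical all_reals all_analysis.
From mathcomp Require finmap.
From mathcomp Require Import lra.
Import Order.TTheory GRing.Theory Num.Theory.
Import numFieldNormedType.Exports.
Local Open Scope classical_set_scope.
Local Open Scope ring_scope.
Set Implicit Arguments. Unset Strict Implicit. Unset Printing Implicit Defensive.

(* Let (x, phi1, phi2) and (x', psi1, psi2) be two solutions and suppose x t > x' t.
   Put d = x - x' = (phi1 + psi2) - (phi2 + psi1), c = d t / 2 and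
   sg = sup {s <= t | d s <= c}.  Since l <= x' and x <= u, on ]sg, t] the solution x
   stays c above l and x' stays c below u, so by (iv) and (v) phi1 and psi2 are
   constant on [sg, t[ and d cannot increase there; hence d sg > c.  The same
   slackness at sg forbids right jumps of phi2, psi1 at sg (so d only jumps up) and
   then atoms of d phi1^r, d psi2^r at sg.  As the right jumps of a monotone function
   cannot accumulate from the left, phi1 and psi2 are left continuous at sg, so d > c
   on a left neighbourhood of sg, contradicting the choice of sg. *)

Definition has_rlim (R : realType) (f : R -> R) : Prop :=
  forall t : R, 0 <= t -> cvg (f x @[x --> t^'+]).

Lemma seq_max d (T : orderType d) (s : seq T) :
  s != [::] -> exists2 m, m \in s & forall x, x \in s -> (x <= m)%O.
Proof.
elim: s => // x s IH _; have [->|/IH[m ms Hm]] := eqVneq s [::].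
  by exists x; rewrite ?mem_seq1 // => z; rewrite mem_seq1 => /eqP ->.
have [xm|mx] := leP x m.
  by exists m; rewrite ?in_cons ?ms ?orbT // => z /predU1P[->|/Hm].
exists x; first exact: mem_head.
by move=> z /predU1P[->//|/Hm zm]; exact: le_trans zm (ltW mx).
Qed.

Section right_limit.
Variable R : realType.
Implicit Types (f g p q : R -> R) (t b c : R).

Lemma rlim_ge f t b c : cvg (f x @[x --> t^'+]) -> t < b ->
  (forall z, t < z < b -> c <= f z) -> c <= rlim f t.
Proof.
move=> cf tb fc; apply: limr_ge => //; near=> z; apply: fc; apply/andP; split.
  by near: z; exact: nbhs_right_gt.
by near: z; exact: nbhs_right_lt.
Unshelve. all: by end_near. Qed.

Lemma rlim_le f t b c : cvg (f x @[x --> t^'+]) -> t < b ->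
  (forall z, t < z < b -> f z <= c) -> rlim f t <= c.
Proof.
move=> cf tb fc; apply: limr_le => //; near=> z; apply: fc; apply/andP; split.
  by near: z; exact: nbhs_right_gt.
by near: z; exact: nbhs_right_lt.
Unshelve. all: by end_near. Qed.

Lemma rlimB f g t : cvg (f x @[x --> t^'+]) -> cvg (g x @[x --> t^'+]) ->
  rlim (fun z => f z - g z) t = rlim f t - rlim g t.
Proof. by move=> cf cg; apply: cvg_lim => //; exact: cvgB. Qed.

Lemma rlimB_ge f g t b c : cvg (f x @[x --> t^'+]) -> cvg (g x @[x --> t^'+]) ->
  t < b -> (forall z, t < z < b -> c <= f z - g z) -> c <= rlim f t - rlim g t.
Proof.
move=> cf cg tb fgc; rewrite -rlimB //; apply: (rlim_ge _ tb fgc).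
exact: cvgP (cvgB cf cg).
Qed.

Lemma rjump_addB f g p q t :
  cvg (g x @[x --> t^'+]) -> cvg (p x @[x --> t^'+]) -> cvg (q x @[x --> t^'+]) ->
  (forall z, t <= z -> f z = g z + (p z - q z)) ->
  rjump f t = rjump g t + (rjump p t - rjump q t).
Proof.
move=> cg cp cq fE.
have rfE : rlim f t = rlim g t + (rlim p t - rlim q t).
  apply: cvg_lim => //; apply: cvg_trans (cvgD cg (cvgB cp cq)).
  apply: near_eq_cvg; near=> z; apply/esym/fE/ltW.
  by near: z; exact: nbhs_right_gt.
by rewrite /rjump rfE fE //; lra.
Unshelve. all: by end_near. Qed.

End right_limit.

Definition jumpsum (R : realType) (phi : R -> R) (a b : R) : \bar R :=
  (\esum_(s in [set s : R | (a <= s < b)%R]) (rjump phi s)%:E)%E.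

Definition jumps (R : realType) (phi : R -> R) (a b : R) : R :=
  fine (jumpsum phi a b).

Section jumps.
Variables (R : realType) (phi : R -> R).
Hypotheses (phi_nd : nondecr_R_plus phi) (phi_rlim : has_rlim phi).
Implicit Types a b e m t : R.

Lemma rjump_ge0 t : 0 <= t -> 0 <= rjump phi t.
Proof.
move=> t0; rewrite /rjump subr_ge0.
have t_lt : t < t + 1 by rewrite ltrDl.
apply: (rlim_ge (phi_rlim t0) t_lt) => z /andP[tz _].
exact: phi_nd (ltW tz).
Qed.

Lemma rlim_le_later t b : 0 <= t -> t < b -> rlim phi t <= phi b.
Proof.
move=> t0 tb; apply: (rlim_le (phi_rlim t0) tb) => z /andP[tz zb].
by apply: phi_nd; [exact: le_trans t0 (ltW tz) | exact: ltW].
Qed.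

Lemma sum_rjump_le (s : seq R) (a b : R) : uniq s -> 0 <= a -> a <= b ->
  {in s, forall x, a <= x < b} -> \sum_(x <- s) rjump phi x <= phi b - phi a.
Proof.
have [n] := ubnP (size s); elim: n s b => // n IH s b sz us a0 ab sab.
have [->|s_nil] := eqVneq s [::]; first by rewrite big_nil subr_ge0 phi_nd.
have [m ms sm] := seq_max s_nil; have /andP[am mb] := sab m ms.
rewrite (perm_big _ (perm_to_rem ms)) big_cons.
have rest : \sum_(x <- rem m s) rjump phi x <= phi m - phi a.
  apply: IH => //; first by rewrite size_rem // -ltnS prednK // lt0n size_eq0.
  - exact: rem_uniq.
  - move=> x; rewrite (mem_rem_uniq _ us) inE => /andP[xm xs].
    by have /andP[-> _] := sab x xs; rewrite lt_neqAle xm sm.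
have jm : rjump phi m <= phi b - phi m.
  by rewrite /rjump lerB // rlim_le_later // (le_trans a0 am).
by apply: le_trans (lerD jm rest) _; lra.
Qed.

Lemma jumpsum_ge0 a b : 0 <= a -> (0 <= jumpsum phi a b)%E.
Proof.
move=> a0; apply: esum_ge0 => s /andP[as_ _].
by rewrite lee_fin rjump_ge0 // (le_trans a0 as_).
Qed.

Lemma jumpsum_le a b : 0 <= a -> a <= b -> (jumpsum phi a b <= (phi b - phi a)%:E)%E.
Proof.
move=> a0 ab; apply: ge_ereal_sup => _ [X [finX XS] <-].
rewrite fsbig_finite //= sumEFin lee_fin; apply: sum_rjump_le => //.
  exact: finmap.fset_uniq.
by move=> x; rewrite in_fset_set // inE => /XS.
Qed.

Lemma jumpsumE a b : 0 <= a -> a <= b -> jumpsum phi a b = (jumps phi a b)%:E.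
Proof.
move=> a0 ab; rewrite fineK //; apply/fin_numPlt/andP; split.
  exact: lt_le_trans ltNy0 (jumpsum_ge0 _ a0).
exact: le_lt_trans (jumpsum_le a0 ab) (ltry _).
Qed.

Lemma jumps_le a b : 0 <= a -> a <= b -> jumps phi a b <= phi b - phi a.
Proof. by move=> a0 ab; rewrite -lee_fin -jumpsumE //; exact: jumpsum_le. Qed.

Lemma jumps_split a m b : 0 <= a -> a <= m -> m <= b ->
  jumps phi a b = jumps phi a m + jumps phi m b.
Proof.
move=> a0 am mb; have m0 := le_trans a0 am.
apply: EFin_inj; rewrite EFinD -!jumpsumE //; last exact: le_trans am mb.
rewrite /jumpsum (esumID [set s | s < m]); last first.
  by move=> s /andP[as_ _]; rewrite lee_fin rjump_ge0 // (le_trans a0 as_).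
congr (_ + _)%E; congr esum; apply/seteqP; split => s /=.
- by move=> [/andP[-> _] ->].
- by move=> /andP[-> sm]; rewrite (lt_le_trans sm mb).
- by move=> [/andP[_ ->]] /negP; rewrite -leNgt andbT.
- move=> /andP[ms ->]; rewrite (le_trans am ms); split => //.
  by apply/negP; rewrite -leNgt.
Qed.

Lemma rjump_le_jumps a (s : R) b : 0 <= a -> a <= s < b -> rjump phi s <= jumps phi a b.
Proof.
move=> a0 /andP[as_ sb]; rewrite -lee_fin -jumpsumE //; last first.
  exact: le_trans as_ (ltW sb).
apply: esum_ge; exists [set s]; last by rewrite fsbig_set1.
by split; [exact: finite_set1 | move=> z /= ->; rewrite as_ sb].
Qed.

Lemma jumps_eq0 a b : (forall s, a <= s < b -> rjump phi s = 0) -> jumps phi a b = 0.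
Proof. by move=> j0; rewrite /jumps /jumpsum esum1 // => s /j0 ->. Qed.

(* A finite family of jumps nearly exhausting [jumpsum phi 0 b] lies below some
   m < b, so the jumps in [s, b) are small once s > m. *)
Lemma jumps_left_small b e : 0 < b -> 0 < e ->
  exists2 s0, 0 <= s0 < b & forall s, s0 <= s <= b -> jumps phi s b < e.
Proof.
move=> b0 e0.
have : (jumpsum phi 0 b - e%:E < jumpsum phi 0 b)%E.
  by rewrite jumpsumE // ?ltW // -EFinB lte_fin ltrBlDr ltrDl.
move=> /ereal_sup_gt[_ [X [finX X0b] <-]] XE.
have [m /andP[m0 mb] Xm] : exists2 m, 0 <= m < b & X `<=` [set x | x <= m].
  have [sX_nil|/seq_max[m]] := eqVneq (finmap.enum_fset (fset_set X)) [::].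
    exists 0; first by rewrite lexx.
    move=> x Xx; suff : x \in finmap.enum_fset (fset_set X) by rewrite sX_nil.
    by rewrite in_fset_set // inE.
  rewrite !in_fset_set // inE => /X0b mX Xm; exists m => // x Xx.
  by apply: Xm; rewrite in_fset_set // inE.
exists ((m + b) / 2) => [|s /andP[ms sb]]; first by apply/andP; split; lra.
have s0 : 0 <= s by lra.
have : (\sum_(x \in X) (rjump phi x)%:E <= jumpsum phi 0 s)%E.
  apply: esum_ge; exists X => //; split => // x Xx /=.
  by have /andP[-> _] := X0b x Xx; have := Xm x Xx; rewrite /= => xm; lra.
move: XE; rewrite fsbig_finite //= sumEFin !jumpsumE ?(ltW b0) //.
rewrite (jumps_split (lexx 0) s0 sb) -EFinB lte_fin lee_fin; lra.
Qed.

End jumps.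

Lemma cvg_mu_oc_set1 (R : realType) (mu : {measure set (measurableTypeR R) -> \bar R})
    (s : R) :
  (mu `](s - 1)%R, s]%classic < +oo)%E ->
  (fun n : nat => mu `]s - n.+1%:R^-1, s]%classic) @ \oo --> mu [set s].
Proof.
move=> fin; have mF (n : nat) :
    measurable (`]s - n.+1%:R^-1, s]%classic : set (measurableTypeR R)).
  by apply: sub_sigma_algebra; exact: is_ocitv.
rewrite (set1_bigcap_oc s); apply: nonincreasing_cvg_mu => //.
- by rewrite /= invr1.
- exact: bigcapT_measurable.
- move=> m n mn; apply/subsetPset => z /=; rewrite !in_itv /= => /andP[sz ->].
  rewrite andbT; apply: le_lt_trans sz.
  by rewrite lerB // lef_pV2 ?posrE ?ler_nat.
Qed.

Lemma measure0_of_integral0 (R : realType)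
    (mu : {measure set (measurableTypeR R) -> \bar R})
    (D A : set (measurableTypeR R)) (f : R -> R) (c : R) :
  measurable A -> A `<=` D -> 0 < c ->
  (forall x, D x -> 0 <= f x) -> (forall x, A x -> c <= f x) ->
  (\int[mu]_(x in D) (f x)%:E = 0)%E -> mu A = 0%E.
Proof.
move=> mA AD c0 f0 fc int0; apply/eqP; rewrite eq_le measure_ge0 andbT.
rewrite -(pmule_rle0 _ (_ : 0 < c%:E)%E) ?lte_fin // -int0.
rewrite ge0_integralE; last by move=> x /f0; rewrite lee_fin.
apply: ereal_sup_ubound => /=; exists (scale_nnsfun (indic_nnsfun R mA) (ltW c0)).
  move=> x /=; rewrite /patch measurable_realfun.mindicE.
  have [/set_mem xA|_] := boolP (x \in A).
    by rewrite mem_set ?mulr1 ?lee_fin ?fc //; exact: AD.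
  by rewrite mulr0; case: ifPn => // /set_mem Dx; rewrite lee_fin f0.
by rewrite /scale_nnsfun /= sintegralrM sintegral_indic.
Qed.

Section rcpart.
Variables (R : realType) (phi : R -> R).
Hypotheses (phi_nd : nondecr_R_plus phi) (phi_rlim : has_rlim phi) (phi0 : phi 0 = 0).
Implicit Types a b e t : R.

Lemma rcpartE t : 0 <= t -> rcpart phi t = phi t - jumps phi 0 t.
Proof. by move=> t0; rewrite /rcpart ltNge t0. Qed.

Lemma rcpartB a b : 0 <= a -> a <= b ->
  rcpart phi b - rcpart phi a = phi b - phi a - jumps phi a b.
Proof.
move=> a0 ab; rewrite !rcpartE ?(le_trans a0 ab) //.
rewrite (jumps_split phi_nd phi_rlim (lexx 0) a0 ab); lra.
Qed.

Lemma rcpart_nondecreasing : {homo rcpart phi : s t / s <= t}.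
Proof.
move=> s t st; have [t0|t0] := ltP t 0.
  by rewrite /rcpart (le_lt_trans st t0) t0.
have [s0|s0] := ltP s 0.
  rewrite {1}/rcpart s0 rcpartE // subr_ge0.
  by apply: le_trans (jumps_le phi_nd phi_rlim (lexx 0) t0) _; rewrite phi0 subr0.
by rewrite -subr_ge0 rcpartB // subr_ge0 jumps_le.
Qed.

Lemma rcpart_right_continuous : right_continuous (rcpart phi).
Proof.
move=> t; have [t0|t0] := ltP t 0.
  rewrite {2}/rcpart t0; apply: cvg_near_cst; near=> z.
  by rewrite /rcpart ifT //; near: z; exact: nbhs_right_lt.
have phi_t : phi x @[x --> t^'+] --> rlim phi t := phi_rlim t0.
apply/cvgrPdist_lt => e e0; move/cvgrPdist_lt : phi_t => /(_ e e0).
apply: filterS2 (nbhs_right_gt t) => z tz /= phiz.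
(* rcpart removes the right jump at t, so rcpart z - rcpart t <= phi z - rlim phi t. *)
have jt : rjump phi t <= jumps phi t z by rewrite (rjump_le_jumps phi_nd) // lexx.
have rc_tz := rcpart_nondecreasing (ltW tz).
rewrite distrC ger0_norm ?subr_ge0 // rcpartB ?(ltW tz) //.
move: phiz jt; rewrite distrC /rjump => /(le_lt_trans (ler_norm _)); lra.
Unshelve. all: by end_near. Qed.

Lemma dphir_itv_oc a b : a <= b ->
  dphir phi `]a, b]%classic = (rcpart phi b - rcpart phi a)%:E.
Proof.
move=> ab; rewrite /dphir /as_cumulative; case: pselect => [H|[]]; last first.
  by split; [exact: rcpart_nondecreasing | exact: rcpart_right_continuous].
rewrite /lebesgue_stieltjes_measure /measure_extension measurable_mu_extE //.
  by rewrite /= wlength_itv_bnd.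
exact: is_ocitv.
Qed.

Lemma rcpart_left_small a e : dphir phi [set a] = 0%E -> 0 < e ->
  exists2 s0, s0 < a & forall s, s0 <= s <= a -> rcpart phi a - rcpart phi s < e.
Proof.
move=> atom0 e0.
have fin : (dphir phi `](a - 1)%R, a]%classic < +oo)%E.
  by rewrite dphir_itv_oc ?ltry // lerBlDr lerDl.
have oc_n (n : nat) : dphir phi `]a - n.+1%:R^-1, a]%classic
    = (rcpart phi a - rcpart phi (a - n.+1%:R^-1))%:E.
  by rewrite dphir_itv_oc // lerBlDr lerDl invr_ge0.
have : (fun n : nat => (rcpart phi a - rcpart phi (a - n.+1%:R^-1))%:E)
    @ \oo --> 0%E.
  by rewrite -(funext oc_n) -atom0; exact: cvg_mu_oc_set1.
move=> /fine_cvgP[_] /= /cvgrPdist_lt /(_ _ e0) [N _ /(_ N (leqnn N))].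
rewrite sub0r normrN => /(le_lt_trans (ler_norm _)) rcN.
exists (a - N.+1%:R^-1) => [|s /andP[Ns sa]]; first by rewrite ltrBlDr ltrDl.
by apply: le_lt_trans rcN; rewrite lerB // rcpart_nondecreasing.
Qed.

Lemma left_small_of_no_atom a e : 0 < a -> dphir phi [set a] = 0%E -> 0 < e ->
  exists2 s0, 0 <= s0 < a & forall s, s0 <= s <= a -> phi a - phi s < e.
Proof.
move=> a0 atom0 e0; have e20 : 0 < e / 2 by rewrite divr_gt0.
have [s1 s1a rc_small] := rcpart_left_small atom0 e20.
have [s2 /andP[s20 s2a] j_small] := jumps_left_small phi_nd phi_rlim a0 e20.
exists (Num.max s1 s2) => [|s]; first by rewrite le_max s20 orbT gt_max s1a.
rewrite ge_max => /andP[/andP[s1s s2s] sa]; have s0 := le_trans s20 s2s.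
have := rcpartB s0 sa; have := rc_small s; have := j_small s.
rewrite s1s s2s sa => /(_ isT) ? /(_ isT) ?; lra.
Qed.

End rcpart.

(* Conditions (iv) and the first half of (v), for phi = phi^1 with (f, g) = (l, x)
   and for phi = phi^2 with (f, g) = (x, u). *)
Record regulator (R : realType) (phi f g : R -> R) : Prop := Regulator {
  regulator_nd : nondecr_R_plus phi;
  regulator0 : phi 0 = 0;
  regulator_rlim : has_rlim phi;
  regulator_integral :
    (\int[dphir phi]_(s in (`[0%R, +oo[%classic : set R) : set (measurableTypeR R))
       (Num.min (g s - f s) (rlim g s - rlim f s))%:E = 0)%E;
  regulator_jumps : forall t : R, 0 <= t ->
    (\esum_(s in (`[0%R, t]%classic : set R))
       ((rlim g s - rlim f s) * rjump phi s)%:E = 0)%E }.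

Lemma rjump_eq0_of_esum0 (R : realType) (phi c : R -> R) (t s : R) :
  (\esum_(s in (`[0%R, t]%classic : set R)) (c s * rjump phi s)%:E = 0)%E ->
  0 <= s <= t -> 0 < c s -> 0 <= rjump phi s -> rjump phi s = 0.
Proof.
move=> esum0 st cs js; apply/eqP; rewrite eq_le js andbT -(pmulr_rle0 _ cs).
suff : ((c s * rjump phi s)%:E <= 0)%E by rewrite lee_fin.
rewrite -esum0; apply: esum_ge; exists [set s]; last by rewrite fsbig_set1.
by split; [exact: finite_set1 | move=> z /= ->; rewrite in_itv].
Qed.

Section regulator.
Variables (R : realType) (phi f g : R -> R).
Hypotheses (phi_reg : regulator phi f g) (f_rlim : has_rlim f) (g_rlim : has_rlim g)
  (f_le_g : forall s, 0 <= s -> f s <= g s).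
Implicit Types a b c s t : R.

Let integrand s := Num.min (g s - f s) (rlim g s - rlim f s).

Lemma regulator_integrand_ge0 s : 0 <= s -> 0 <= integrand s.
Proof.
move=> s0; rewrite le_min subr_ge0 f_le_g //=.
have s_lt : s < s + 1 by rewrite ltrDl.
apply: (rlimB_ge (g_rlim s0) (f_rlim s0) s_lt) => z /andP[sz _].
by rewrite subr_ge0 f_le_g // (le_trans s0 (ltW sz)).
Qed.

Lemma regulator_no_atom s : 0 <= s -> 0 < g s - f s -> 0 < rlim g s - rlim f s ->
  dphir phi [set s] = 0%E.
Proof.
move=> s0 gap rgap.
apply: (@measure0_of_integral0 R (dphir phi) _ _ integrand (integrand s)
  _ _ _ _ _ (regulator_integral phi_reg)) => //.
- by move=> z /= ->; rewrite in_itv /= s0.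
- by rewrite lt_min gap rgap.
- by move=> z; rewrite /= in_itv /= andbT; exact: regulator_integrand_ge0.
- by move=> z /= ->.
Qed.

Lemma regulator_const a t c : 0 <= a -> 0 < c ->
  (forall z, a < z <= t -> c < g z - f z) -> forall b, a <= b < t -> phi b = phi a.
Proof.
case: phi_reg => phi_nd phi0 phi_rlim int0 esum0 a0 c0 gap b /andP[ab bt].
have rgap s : a <= s < t -> c <= rlim g s - rlim f s.
  move=> /andP[as_ st]; have s0 := le_trans a0 as_.
  apply: (rlimB_ge (g_rlim s0) (f_rlim s0) st) => z /andP[sz zt].
  by apply/ltW/gap; rewrite (le_lt_trans as_ sz) ltW.
have rc_eq : rcpart phi b = rcpart phi a.
  have : dphir phi `]a, b]%classic = 0%E.
    apply: (measure0_of_integral0 (f := integrand) _ _ c0 _ _ int0).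
    - by apply: sub_sigma_algebra; exact: is_ocitv.
    - move=> z /=; rewrite !in_itv /= andbT => /andP[az _].
      exact: le_trans a0 (ltW az).
    - by move=> z; rewrite /= in_itv /= andbT; exact: regulator_integrand_ge0.
    - move=> z /=; rewrite in_itv /= => /andP[az zb]; rewrite le_min.
      rewrite ltW ?gap ?az ?(le_trans zb (ltW bt)) //=.
      by rewrite rgap // (ltW az) (le_lt_trans zb bt).
  by rewrite dphir_itv_oc // => -[/eqP]; rewrite subr_eq0 => /eqP.
have jumps0 : jumps phi a b = 0.
  apply: jumps_eq0 => s /andP[as_ sb]; have s0 := le_trans a0 as_.
  apply: (rjump_eq0_of_esum0 (esum0 b (le_trans a0 ab))).
  - by rewrite s0 ltW.
  - by apply: lt_le_trans c0 (rgap s _); rewrite as_ (lt_trans sb bt).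
  - exact: rjump_ge0.
by have := rcpartB phi_nd phi_rlim a0 ab; rewrite rc_eq jumps0; lra.
Qed.

End regulator.

Section comparison.
Variables (R : realType) (y l u x x' p1 p2 q1 q2 : R -> R).
Hypotheses
  (xE : forall s : R, 0 <= s -> x s = y s + (p1 s - p2 s))
  (x'E : forall s : R, 0 <= s -> x' s = y s + (q1 s - q2 s))
  (l_le_x : forall s : R, 0 <= s -> l s <= x s)
  (x_le_u : forall s : R, 0 <= s -> x s <= u s)
  (l_le_x' : forall s : R, 0 <= s -> l s <= x' s)
  (x'_le_u : forall s : R, 0 <= s -> x' s <= u s)
  (y_rlim : has_rlim y) (l_rlim : has_rlim l) (u_rlim : has_rlim u)
  (x_rlim : has_rlim x) (x'_rlim : has_rlim x')
  (p1_reg : regulator p1 l x) (p2_reg : regulator p2 x u)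
  (q1_reg : regulator q1 l x') (q2_reg : regulator q2 x' u)
  (p2_slack : forall t : R, 0 <= t ->
    (\esum_(s in (`[0%R, t]%classic : set R)) ((x s - l s) * rjump p2 s)%:E = 0)%E)
  (q1_slack : forall t : R, 0 <= t ->
    (\esum_(s in (`[0%R, t]%classic : set R)) ((u s - x' s) * rjump q1 s)%:E = 0)%E).
Implicit Types a b c s t : R.

Let d s := x s - x' s.

Let dE s : 0 <= s -> d s = (p1 s + q2 s) - (p2 s + q1 s).
Proof. by move=> s0; rewrite /d xE ?x'E //; lra. Qed.

Let d_le_barriers s : 0 <= s -> d s <= x s - l s /\ d s <= u s - x' s.
Proof.
move=> s0; have := l_le_x' s0; have := x_le_u s0; rewrite /d; split; lra.
Qed.

(* Where d > 0, x is off l and x' is off u, so p2 and q1 cannot jump right. *)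
Lemma d_le_rlim s : 0 <= s -> 0 < d s -> d s <= rlim x s - rlim x' s.
Proof.
move=> s0 ds0; have [dxl dux'] := d_le_barriers s0.
have ss : 0 <= s <= s by rewrite s0 lexx.
have p2_jump0 : rjump p2 s = 0.
  apply: (rjump_eq0_of_esum0 (p2_slack s0) ss); first lra.
  exact: (rjump_ge0 (regulator_nd p2_reg) (regulator_rlim p2_reg) s0).
have q1_jump0 : rjump q1 s = 0.
  apply: (rjump_eq0_of_esum0 (q1_slack s0) ss); first lra.
  exact: (rjump_ge0 (regulator_nd q1_reg) (regulator_rlim q1_reg) s0).
have x_jump : rjump x s = rjump y s + (rjump p1 s - rjump p2 s).
  apply: (rjump_addB (y_rlim s0) (regulator_rlim p1_reg s0)
    (regulator_rlim p2_reg s0)) => z sz.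
  exact: xE (le_trans s0 sz).
have x'_jump : rjump x' s = rjump y s + (rjump q1 s - rjump q2 s).
  apply: (rjump_addB (y_rlim s0) (regulator_rlim q1_reg s0)
    (regulator_rlim q2_reg s0)) => z sz.
  exact: x'E (le_trans s0 sz).
have := rjump_ge0 (regulator_nd p1_reg) (regulator_rlim p1_reg) s0.
have := rjump_ge0 (regulator_nd q2_reg) (regulator_rlim q2_reg) s0.
move: x_jump x'_jump p2_jump0 q1_jump0; rewrite /rjump /d; lra.
Qed.

Lemma d_le_after a t c : 0 <= a -> 0 < c -> (forall z, a < z <= t -> c < d z) ->
  forall b, a <= b < t -> d b <= d a.
Proof.
move=> a0 c0 gap b /andP[ab bt]; have b0 := le_trans a0 ab.
have p1_const : p1 b = p1 a.
  apply: (regulator_const p1_reg l_rlim x_rlim l_le_x a0 c0 (t := t));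
    last by rewrite ab bt.
  move=> z /andP[az zt]; have [+ _] := d_le_barriers (le_trans a0 (ltW az)).
  by have := gap z; rewrite az zt => /(_ isT); lra.
have q2_const : q2 b = q2 a.
  apply: (regulator_const q2_reg x'_rlim u_rlim x'_le_u a0 c0 (t := t));
    last by rewrite ab bt.
  move=> z /andP[az zt]; have [_ +] := d_le_barriers (le_trans a0 (ltW az)).
  by have := gap z; rewrite az zt => /(_ isT); lra.
have := regulator_nd p2_reg a0 ab; have := regulator_nd q1_reg a0 ab.
rewrite (dE a0) (dE b0) p1_const q2_const; lra.
Qed.

Lemma d_gt_gap_start a t c : 0 <= a <= t -> 0 < c -> c < d t ->
  (forall z, a < z <= t -> c < d z) -> c < d a.
Proof.
move=> /andP[a0 at_] c0 cdt gap; have [a_lt_t|t_le_a] := ltP a t; last first.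
  by have -> : a = t by apply/le_anti; rewrite at_ t_le_a.
have mid : a < (a + t) / 2 < t by apply/andP; split; lra.
have := gap ((a + t) / 2); have := d_le_after a0 c0 gap (b := (a + t) / 2).
case/andP: mid => a_mid mid_t; rewrite a_mid (ltW a_mid) (ltW mid_t) mid_t.
by move=> /(_ isT) ? /(_ isT); lra.
Qed.

Lemma d_gt_left a c : 0 < a -> 0 <= c -> c < d a ->
  exists2 s0, s0 < a & forall s, s0 <= s <= a -> c < d s.
Proof.
move=> a_gt0 c0 cda; have a0 := ltW a_gt0; have da0 := le_lt_trans c0 cda.
have [dxl dux'] := d_le_barriers a0.
have drlim := d_le_rlim a0 da0.
have a_lt : a < a + 1 by rewrite ltrDl.
have rlim_lx' : 0 <= rlim x' a - rlim l a.
  apply: (rlimB_ge (x'_rlim a0) (l_rlim a0) a_lt) => z /andP[az _].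
  by rewrite subr_ge0 l_le_x' // (le_trans a0 (ltW az)).
have rlim_xu : 0 <= rlim u a - rlim x a.
  apply: (rlimB_ge (u_rlim a0) (x_rlim a0) a_lt) => z /andP[az _].
  by rewrite subr_ge0 x_le_u // (le_trans a0 (ltW az)).
have p1_atom0 : dphir p1 [set a] = 0%E.
  by apply: (regulator_no_atom p1_reg l_rlim x_rlim l_le_x); lra.
have q2_atom0 : dphir q2 [set a] = 0%E.
  by apply: (regulator_no_atom q2_reg x'_rlim u_rlim x'_le_u); lra.
have e0 : 0 < (d a - c) / 2 by rewrite divr_gt0 // subr_gt0.
have [s1 /andP[s10 s1a] p1_small] := left_small_of_no_atom
  (regulator_nd p1_reg) (regulator_rlim p1_reg) (regulator0 p1_reg) a_gt0 p1_atom0 e0.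
have [s2 /andP[s20 s2a] q2_small] := left_small_of_no_atom
  (regulator_nd q2_reg) (regulator_rlim q2_reg) (regulator0 q2_reg) a_gt0 q2_atom0 e0.
exists (Num.max s1 s2) => [|s]; first by rewrite gt_max s1a.
rewrite ge_max => /andP[/andP[s1s s2s] sa]; have s0 := le_trans s10 s1s.
have := p1_small s; have := q2_small s; rewrite s1s s2s sa.
have := regulator_nd p2_reg s0 sa; have := regulator_nd q1_reg s0 sa.
rewrite (dE s0) (dE a0) in cda *.
move=> q1_sa p2_sa /(_ isT) q2_sa /(_ isT) p1_sa; lra.
Qed.

Lemma solution_le t : 0 <= t -> x t <= x' t.
Proof.
move=> t0; rewrite leNgt; apply/negP => x't_lt_xt.
have d0 : d 0 = 0.
  rewrite dE // (regulator0 p1_reg) (regulator0 p2_reg).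
  by rewrite (regulator0 q1_reg) (regulator0 q2_reg) subrr.
have dt0 : 0 < d t by rewrite /d subr_gt0.
pose c := d t / 2.
have c0 : 0 < c by rewrite /c; lra.
have cdt : c < d t by rewrite /c; lra.
pose A := [set s | 0 <= s <= t /\ d s <= c].
have A0 : A 0 by split; [rewrite lexx t0 | rewrite d0 ltW].
have A_sup : has_sup A by split; [exists 0 | exists t => s [/andP[_ ->]]].
pose sg := sup A.
have sg0 : 0 <= sg by exact: sup_upper_bound A_sup _ A0.
have sgt : sg <= t by apply: ge_sup; [exists 0 | move=> s [/andP[_ ->]]].
have gap z : sg < z <= t -> c < d z.
  move=> /andP[sgz zt]; rewrite ltNge; apply/negP => dzc.
  have Az : A z by split => //; rewrite zt (le_trans sg0 (ltW sgz)).
  by have := sup_upper_bound A_sup Az; rewrite leNgt sgz.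
have dsg_gt : c < d sg by apply: (d_gt_gap_start _ c0 cdt gap); rewrite sg0 sgt.
have sg_gt0 : 0 < sg.
  rewrite lt_neqAle sg0 andbT; apply: contraTneq dsg_gt => <-.
  by rewrite d0 -leNgt ltW.
have [s0 s0sg dgt] := d_gt_left sg_gt0 (ltW c0) dsg_gt.
have sg_s0 : 0 < sg - s0 by rewrite subr_gt0.
have [s As sgs] := sup_adherent sg_s0 A_sup.
have ssg : s <= sg := sup_upper_bound A_sup As.
have s0s : s0 <= s by move: sgs; rewrite -/sg; lra.
case: As => _ dsc; have := dgt s; rewrite s0s ssg => /(_ isT); lra.
Qed.

End comparison.

Lemma RP_solution_kE (R : realType) (y l u x k : R -> R) :
  RP_solution y l u x k -> forall t, 0 <= t -> k t = x t - y t.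
Proof. by case=> _ [_ [p1 [p2 [xkE _ _ _ _]]]] t /xkE[-> _]; lra. Qed.

Lemma RP_solution_regulators (R : realType) (y l u x k : R -> R) :
  RP_solution y l u x k -> exists p1 p2 : R -> R,
    [/\ forall s, 0 <= s -> x s = y s + (p1 s - p2 s),
        regulator p1 l x /\ regulator p2 x u,
        forall t, 0 <= t ->
          (\esum_(s in (`[0%R, t]%classic : set R)) ((u s - x s) * rjump p1 s)%:E = 0)%E
      & forall t, 0 <= t ->
          (\esum_(s in (`[0%R, t]%classic : set R)) ((x s - l s) * rjump p2 s)%:E = 0)%E].
Proof.
case=> _ [_ [p1 [p2 [xkE _ [[_ rp1] [[_ rp2] [nd1 [nd2 [p10 p20]]]]] [I1 I2] Hv]]]].
exists p1, p2; split.
- by move=> s /xkE[-> ->].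
- split.
  + by apply: (Regulator nd1 p10 rp1 I1) => t t0; exact: (Hv t t0).1.
  + by apply: (Regulator nd2 p20 rp2 I2) => t t0; exact: (Hv t t0).2.2.1.
- by move=> t t0; exact: (Hv t t0).2.1.
- by move=> t t0; exact: (Hv t t0).2.2.2.
Qed.

Lemma RP_solution_le (R : realType) (y l u x k x' k' : R -> R) :
  has_rlim y -> has_rlim l -> has_rlim u ->
  RP_solution y l u x k -> RP_solution y l u x' k' ->
  forall t, 0 <= t -> x t <= x' t.
Proof.
move=> y_rlim l_rlim u_rlim sol sol' t t0.
have [[_ x_rlim] [_ [_ [_ [_ x_bnd _ _ _]]]]] := sol.
have [[_ x'_rlim] [_ [_ [_ [_ x'_bnd _ _ _]]]]] := sol'.
have [p1 [p2 [xE [p1_reg p2_reg] _ p2_slack]]] := RP_solution_regulators sol.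
have [q1 [q2 [x'E [q1_reg q2_reg] q1_slack _]]] := RP_solution_regulators sol'.
apply: (solution_le xE x'E _ _ _ _ y_rlim l_rlim u_rlim x_rlim x'_rlim
  p1_reg p2_reg q1_reg q2_reg p2_slack q1_slack t0) => s s0.
all: by [case/andP: (x_bnd s s0) | case/andP: (x'_bnd s s0)].
Qed.

Theorem theorem1 (R : realType) (y l u : R -> R) :
  regulated y -> regulated l -> regulated u ->
  (forall t, 0 <= t -> l t <= u t) ->
  l 0 <= y 0 <= u 0 ->
  (forall t, 0 <= t -> 0 < inf [set u s - l s | s in `[0, t]]) ->
  forall x k x' k' : R -> R,
    RP_solution y l u x k -> RP_solution y l u x' k' ->
    forall t, 0 <= t -> x t = x' t /\ k t = k' t.
Proof.
(* l <= u, l 0 <= y 0 <= u 0 and inf (u - l) > 0 only matter for existence. *)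
move=> [_ y_rlim] [_ l_rlim] [_ u_rlim] _ _ _ x k x' k' sol sol' t t0.
have x_eq : x t = x' t.
  apply: le_anti; rewrite (RP_solution_le y_rlim l_rlim u_rlim sol sol' t0).
  by rewrite (RP_solution_le y_rlim l_rlim u_rlim sol' sol t0).
by rewrite (RP_solution_kE sol) ?(RP_solution_kE sol') // x_eq.
Qed.
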